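(* Let $n_1,m_1,n_2,m_2\in\mathbb{N}$, $c\in\mathbb{R}^{n_1}$, $A\in\mathbb{R}^{m_1\times n_1}$, $b\in\mathbb{R}^{m_1}$. Let $\boldsymbol{\xi}$ be a random vector taking values in a finite set $\mathcal{S}$ of scenarios with probabilities $\mathbb{P}(\xi)$, and for each $\xi\in\mathcal{S}$ let $q(\xi)\in\mathbb{R}^{n_2}$, $T(\xi)\in\mathbb{R}^{m_2\times n_1}$, $W(\xi)\in\mathbb{R}^{m_2\times n_2}$, $h(\xi)\in\mathbb{R}^{m_2}$. For $x\in\mathbb{R}^{n_1}$ and $\xi\in\mathcal{S}$ let $$Q(x,\xi)=\max\{\langle q(\xi),y\rangle:\ T(\xi)x+W(\xi)y\le h(\xi),\ y\ge 0,\ y\in\mathbb{R}^{n_2}\},$$ and let $$z^*=\max\{\langle c,x\rangle+\mathbb{E}_{\boldsymbol{\xi}}[Q(x,\boldsymbol{\xi})]:\ Ax\le b,\ x\ge 0\}$$ be the optimal objective value of the two-stage stochastic program. Let $R=\max\{\|x\|_2: Ax\le b,\ x\ge 0\}$, let $\tilde x$ be an optimal solution of $\max\{\langle c,x\rangle: Ax\le b,\ x\ge 0\}$, and for $\tau\ge 0$ let $\tilde x_\tau$ denote the solution of the convex problem $$\max\{\langle c,x_\tau\rangle:\ Ax_\tau\le b,\ \|x_\tau\|_2\le\tau,\ x_\tau\ge 0\}. \qquad (\ast)$$ Let $\varepsilon>0$ and assume all of the following: (a) the set $\{x: Ax\le b,\ x\ge 0\}$ is nonempty and bounded, and for each $\tau\ge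 0$ problem $(\ast)$ is feasible and has a unique solution; (b) for every $\xi\in\mathcal{S}$ and every $x\in\mathbb{R}^{n_1}$ with $\|x\|_2\le R$, the linear program defining $Q(x,\xi)$ is feasible and bounded; (c) for every $x\in\mathbb{R}^{n_1}$ with $\|x\|_2\le R$, $\big|\mathbb{E}_{\boldsymbol{\xi}}Q(x,\boldsymbol{\xi})-\mathbb{E}_{\boldsymbol{\xi}}Q((\|x\|_2,0,\dots,0)^\top,\boldsymbol{\xi})\big|\le\varepsilon$; (d) whenever $\|\tilde x\|_2\le\tau_1\le\tau_2\le R$, $\mathbb{E}_{\boldsymbol{\xi}}[Q((\tau_1,0,\dots,0)^\top,\boldsymbol{\xi})]\ge\mathbb{E}_{\boldsymbol{\xi}}[Q((\tau_2,0,\dots,0)^\top,\boldsymbol{\xi})]-\varepsilon$. Define $$\hat z^*=\max\Big\{\langle c,\tilde x_\tau\rangle+\mathbb{E}_{\boldsymbol{\xi}}[Q((\|\tilde x_\tau\|_2,0,\dots,0)^\top,\boldsymbol{\xi})]:\ 0\le\tau\le R\Big\}.$$ Then $|z^*-\hat z^*|\le 2\varepsilon$.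
   Context: $\mathbb{E}_{\boldsymbol{\xi}}[f(\boldsymbol{\xi})]=\sum_{\xi\in\mathcal{S}}\mathbb{P}(\xi)f(\xi)$. Vector inequalities are componentwise. $(t,0,\dots,0)^\top\in\mathbb{R}^{n_1}$ denotes $t$ times the first standard basis vector. Condition (c) is called approximate rotational invariance and (d) approximate monotonicity in the paper. *)

From HB Require Import structures.
From mathcomp Require Import all_boot all_order all_algebra.
From mathcomp Require Import boolp classical_sets reals.
Set Implicit Arguments. Unset Strict Implicit. Unset Printing Implicit Defensive.
Import Order.TTheory GRing.Theory Num.Theory.
Local Open Scope ring_scope.
Local Open Scope classical_set_scope.

Definition dotv {R : realType} {n : nat} (u v : 'cV[R]_n) : R :=
  \sum_(i < n) u i 0 * v i 0.

Definition norm2 {R : realType} {n : nat} (x : 'cV[R]_n) : R :=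
  Num.sqrt (\sum_(i < n) x i 0 ^+ 2).

Definition lev {R : realType} {m : nat} (u v : 'cV[R]_m) : Prop :=
  forall i, u i 0 <= v i 0.

Definition nonnegv {R : realType} {n : nat} (x : 'cV[R]_n) : Prop :=
  forall i, 0 <= x i 0.

Definition e1 {R : realType} (n : nat) (t : R) : 'cV[R]_n :=
  \col_(i < n) (if val i == 0%N then t else 0).

Definition feas1 {R : realType} {m1 n1 : nat} (A : 'M[R]_(m1, n1)) (b : 'cV[R]_m1)
  (x : 'cV[R]_n1) : Prop := lev (A *m x) b /\ nonnegv x.

Definition feas2 {R : realType} {m2 n1 n2 : nat} (T : 'M[R]_(m2, n1))
  (W : 'M[R]_(m2, n2)) (h : 'cV[R]_m2) (x : 'cV[R]_n1) (y : 'cV[R]_n2) : Prop :=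
  lev (T *m x + W *m y) h /\ nonnegv y.

Definition Qvals {R : realType} {m2 n1 n2 : nat} (q : 'cV[R]_n2) (T : 'M[R]_(m2, n1))
  (W : 'M[R]_(m2, n2)) (h : 'cV[R]_m2) (x : 'cV[R]_n1) : set R :=
  [set v | exists y, feas2 T W h x y /\ v = dotv q y].

(* Q(x, xi): optimal value of the second-stage LP (its supremum, which is
   attained, i.e. the max, whenever the LP is feasible and bounded) *)
Definition Qfun {R : realType} {m2 n1 n2 : nat} (q : 'cV[R]_n2) (T : 'M[R]_(m2, n1))
  (W : 'M[R]_(m2, n2)) (h : 'cV[R]_m2) (x : 'cV[R]_n1) : R :=
  sup (Qvals q T W h x).

Definition expect {R : realType} {S : finType} (P : S -> R) (f : S -> R) : R :=
  \sum_(s : S) P s * f s.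

From HB Require Import structures.
From mathcomp Require Import all_boot all_order all_algebra.
From mathcomp Require Import boolp classical_sets reals.
From mathcomp.algebra_tactics Require Import ring lra.
Import Order.TTheory GRing.Theory Num.Theory.
Local Open Scope ring_scope.
Local Open Scope classical_set_scope.

(* Both z* and z^ are suprema, so it suffices to match each value of one set
   by a value of the other up to the allowed error.  A feasible x with
   tau = |x| is beaten by x~_tau in the first stage, and (c) moves
   E Q(x) to E Q(e1 tau) at cost eps.  If |x~| <= tau, uniqueness forces
   x~_tau = x~ and (d) lowers tau to |x~| at cost eps; otherwise the ball
   constraint of ( * ) is active, |x~_tau| = tau, and nothing is lost.
   Conversely x~_tau is itself feasible and (c) costs eps once more.  The
   recourse function enters only through (c) and (d). *)

Section SupApprox.
Context {R : realType} {X Y : set R} {d : R}.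
Hypothesis approxXY : forall x, X x -> exists2 y, Y y & x <= y + d.

Lemma has_ubound_approx : has_ubound Y -> has_ubound X.
Proof.
move=> [M ubM]; exists (M + d) => x /approxXY[y Yy le_xy].
by rewrite (le_trans le_xy) // lerD2r ubM.
Qed.

Lemma sup_le_approx : X !=set0 -> has_sup Y -> sup X <= sup Y + d.
Proof.
move=> X0 supY; apply: ge_sup => // x /approxXY[y Yy le_xy].
by rewrite (le_trans le_xy) // lerD2r sup_upper_bound.
Qed.

End SupApprox.

Lemma sup_dist_le (R : realType) (X Y : set R) (d : R) :
  0 <= d -> X !=set0 -> Y !=set0 ->
  (forall x, X x -> exists2 y, Y y & x <= y + d) ->
  (forall y, Y y -> exists2 x, X x & y <= x + d) ->
  `|sup X - sup Y| <= d.
Proof.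
move=> d0 X0 Y0 approxXY approxYX.
have [ubX|nubX] := pselect (has_ubound X); last first.
  have nubY : ~ has_ubound Y by move/(has_ubound_approx approxXY).
  by rewrite !sup_out ?subrr ?normr0 // => -[].
have ubY := has_ubound_approx approxYX ubX.
have le_XY := sup_le_approx approxXY X0 (conj Y0 ubY).
have le_YX := sup_le_approx approxYX Y0 (conj X0 ubX).
by rewrite ler_norml; apply/andP; split; lra.
Qed.

Section ConvexGeometry.
Context {R : realType} {m n : nat}.
Implicit Types (u v x : 'cV[R]_n) (l : R).

Lemma norm2_ge0 x : 0 <= norm2 x.
Proof. exact: sqrtr_ge0. Qed.

Lemma norm2_sqr x : norm2 x ^+ 2 = \sum_(i < n) x i 0 ^+ 2.
Proof. by rewrite sqr_sqrtr // sumr_ge0 // => i _; rewrite sqr_ge0. Qed.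

Lemma dotvDZ (c u v : 'cV[R]_n) (k1 k2 : R) :
  dotv c (k1 *: u + k2 *: v) = k1 * dotv c u + k2 * dotv c v.
Proof.
rewrite /dotv !mulr_sumr -big_split /=; apply: eq_bigr => i _.
by rewrite !mxE; ring.
Qed.

Lemma norm2_sqr_convex u v l : 0 <= l <= 1 ->
  norm2 ((1 - l) *: u + l *: v) ^+ 2 <= (1 - l) * norm2 u ^+ 2 + l * norm2 v ^+ 2.
Proof.
move=> /andP[l0 l1]; rewrite !norm2_sqr !mulr_sumr -big_split /=.
apply: ler_sum => i _; rewrite !mxE.
have : 0 <= l * (1 - l) * (u i 0 - v i 0) ^+ 2.
  by rewrite mulr_ge0 ?sqr_ge0 // mulr_ge0 //; lra.
nra.
Qed.

Lemma feas1_convex (A : 'M[R]_(m, n)) (b : 'cV[R]_m) u v l : 0 <= l <= 1 ->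
  feas1 A b u -> feas1 A b v -> feas1 A b ((1 - l) *: u + l *: v).
Proof.
move=> /andP[l0 l1] [Au u0] [Av v0]; split=> i.
- move: (Au i) (Av i); rewrite mulmxDr -!scalemxAr !mxE.
  set Aui := (\sum_j _); set Avi := (\sum_j _) => le_u le_v.
  have : 0 <= (1 - l) * (b i 0 - Aui) by rewrite mulr_ge0 //; lra.
  have : 0 <= l * (b i 0 - Avi) by rewrite mulr_ge0 //; lra.
  lra.
- by rewrite !mxE; have := u0 i; have := v0 i; nra.
Qed.

End ConvexGeometry.

Definition ball_argmax {R : realType} {m n : nat} (A : 'M[R]_(m, n)) (b : 'cV[R]_m)
    (c : 'cV[R]_n) (tau : R) (x : 'cV[R]_n) : Prop :=
  (feas1 A b x /\ norm2 x <= tau) /\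
  forall x', feas1 A b x' -> norm2 x' <= tau -> dotv c x' <= dotv c x.

Section BallMaximizers.
Context {R : realType} {m n : nat} {A : 'M[R]_(m, n)} {b : 'cV[R]_m} {c : 'cV[R]_n}.
Context {xt : 'cV[R]_n} {xtau : R -> 'cV[R]_n}.
Hypothesis xt_feas : feas1 A b xt.
Hypothesis xt_opt : forall x, feas1 A b x -> dotv c x <= dotv c xt.
Hypothesis xtau_argmax : forall tau, 0 <= tau -> ball_argmax A b c tau (xtau tau).
Hypothesis ball_argmax_uniq : forall tau, 0 <= tau -> forall x,
  (feas1 A b x /\ norm2 x <= tau) ->
  (forall x', feas1 A b x' -> norm2 x' <= tau -> dotv c x' <= dotv c x) ->
  x = xtau tau.

Lemma xtau_eq_opt tau : norm2 xt <= tau -> xtau tau = xt.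
Proof.
move=> xt_le; have tau0 := le_trans (norm2_ge0 xt) xt_le.
by symmetry; apply: ball_argmax_uniq => // x' x'_feas _; apply: xt_opt.
Qed.

Lemma xtau_norm_active tau : 0 <= tau -> tau < norm2 xt -> norm2 (xtau tau) = tau.
Proof.
move=> tau0 lt_tau_xt.
have [[a_feas a_le] a_opt] := xtau_argmax tau tau0.
set a := xtau tau in a_feas a_le a_opt *.
apply/eqP; rewrite eq_le a_le leNgt; apply/negP => lt_a_tau.
have a0 := norm2_ge0 a.
(* Moving from [a] towards [xt] by the step [l], chosen so that the
   convexity bound on the squared norm reaches [tau ^+ 2], gives a second
   maximizer. *)
pose l := (tau ^+ 2 - norm2 a ^+ 2) / (norm2 xt ^+ 2 - norm2 a ^+ 2).
have gap_gt0 : 0 < norm2 xt ^+ 2 - norm2 a ^+ 2 by nra.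
have l_gt0 : 0 < l by rewrite divr_gt0 //; nra.
have l01 : 0 <= l <= 1 by rewrite ltW //= ler_pdivrMr // mul1r; nra.
have lE : l * (norm2 xt ^+ 2 - norm2 a ^+ 2) = tau ^+ 2 - norm2 a ^+ 2.
  by rewrite mulfVK // gt_eqF.
pose x := (1 - l) *: a + l *: xt.
have x_le : norm2 x <= tau.
  have := norm2_sqr_convex a xt l l01; have := norm2_ge0 x; nra.
have x_opt : dotv c a <= dotv c x by rewrite dotvDZ; have := xt_opt _ a_feas; nra.
have xa : x = a.
  apply: ball_argmax_uniq => // [|y y_feas y_le].
    by split=> //; apply: feas1_convex.
  exact: le_trans (a_opt y y_feas y_le) x_opt.
have : l *: (xt - a) == 0.
  have -> : l *: (xt - a) = x - a.
    by rewrite /x scalerBl scale1r scalerBr addrAC [a - _ - a]addrAC subrr add0r addrC.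
  by rewrite xa subrr.
rewrite scalemx_eq0 gt_eqF //= subr_eq0 => /eqP xt_a.
by move: lt_tau_xt; rewrite xt_a; lra.
Qed.

Context {f : 'cV[R]_n -> R} {eps Rad : R}.
Hypothesis rot_inv : forall x, norm2 x <= Rad -> `|f x - f (e1 n (norm2 x))| <= eps.
Hypothesis mono : forall t1 t2, norm2 xt <= t1 -> t1 <= t2 -> t2 <= Rad ->
  f (e1 n t2) - eps <= f (e1 n t1).

Lemma objective_le_proxy x : feas1 A b x -> norm2 x <= Rad ->
  dotv c x + f x <=
  dotv c (xtau (norm2 x)) + f (e1 n (norm2 (xtau (norm2 x)))) + 2 * eps.
Proof.
move=> x_feas x_le; have rot_x := rot_inv _ x_le.
have eps0 : 0 <= eps := le_trans (normr_ge0 _) rot_x.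
move: rot_x; rewrite ler_norml => /andP[_].
set tau := norm2 x => fx_le.
have tau0 : 0 <= tau := norm2_ge0 x.
have [_ a_opt] := xtau_argmax tau tau0.
have cx_le : dotv c x <= dotv c (xtau tau) := a_opt x x_feas (lexx _).
have [xt_le|lt_tau_xt] := leP (norm2 xt) tau.
- rewrite xtau_eq_opt // in cx_le *.
  by have := mono _ _ (lexx _) xt_le x_le; lra.
- by rewrite xtau_norm_active //; lra.
Qed.

End BallMaximizers.

Theorem proposition1 (R : realType) (n1 m1 n2 m2 : nat)
  (c : 'cV[R]_n1) (A : 'M[R]_(m1, n1)) (b : 'cV[R]_m1)
  (S : finType) (P : S -> R)
  (hP0 : forall s, 0 <= P s) (hP1 : \sum_(s : S) P s = 1)
  (q : S -> 'cV[R]_n2) (T : S -> 'M[R]_(m2, n1)) (W : S -> 'M[R]_(m2, n2))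
  (h : S -> 'cV[R]_m2)
  (xt : 'cV[R]_n1) (xtau : R -> 'cV[R]_n1) (eps : R)
  (* x~ is an optimal solution of max{<c,x> : Ax <= b, x >= 0} *)
  (hxt : feas1 A b xt /\ forall x, feas1 A b x -> dotv c x <= dotv c xt)
  (* x~_tau is the solution of ( * ) for every tau >= 0 *)
  (hxtau : forall tau, 0 <= tau ->
     (feas1 A b (xtau tau) /\ norm2 (xtau tau) <= tau) /\
     forall x, feas1 A b x -> norm2 x <= tau -> dotv c x <= dotv c (xtau tau))
  (heps : 0 < eps) :
  let EQ := fun x : 'cV[R]_n1 =>
    expect P (fun s => Qfun (q s) (T s) (W s) (h s) x) in
  let Rad := sup [set norm2 x | x in feas1 A b] in
  (* (a) *)
  (exists x, feas1 A b x) ->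
  (exists M : R, forall x, feas1 A b x -> norm2 x <= M) ->
  (forall tau, 0 <= tau -> forall x,
     (feas1 A b x /\ norm2 x <= tau) ->
     (forall x', feas1 A b x' -> norm2 x' <= tau -> dotv c x' <= dotv c x) ->
     x = xtau tau) ->
  (* (b) *)
  (forall s (x : 'cV[R]_n1), norm2 x <= Rad ->
     (exists y, feas2 (T s) (W s) (h s) x y) /\
     has_ubound (Qvals (q s) (T s) (W s) (h s) x)) ->
  (* (c) approximate rotational invariance *)
  (forall x : 'cV[R]_n1, norm2 x <= Rad -> `|EQ x - EQ (e1 n1 (norm2 x))| <= eps) ->
  (* (d) approximate monotonicity *)
  (forall tau1 tau2 : R, norm2 xt <= tau1 -> tau1 <= tau2 -> tau2 <= Rad ->
     EQ (e1 n1 tau2) - eps <= EQ (e1 n1 tau1)) ->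
  let zstar := sup [set dotv c x + EQ x | x in feas1 A b] in
  let zhat := sup [set dotv c (xtau tau) + EQ (e1 n1 (norm2 (xtau tau)))
                   | tau in [set t : R | 0 <= t <= Rad]] in
  `|zstar - zhat| <= 2 * eps.
Proof.
move=> EQ Rad [x0 x0_feas] [M bound] argmax_uniq _ rot_inv mono /=.
case: hxt => xt_feas xt_opt.
have has_sup_norms : has_sup [set norm2 x | x in feas1 A b].
  by split; [exists (norm2 x0), x0 | exists M => _ [x x_feas <-]; apply: bound].
have le_Rad x : feas1 A b x -> norm2 x <= Rad.
  by move=> x_feas; apply: sup_upper_bound => //; exists x.
have Rad0 : 0 <= Rad := le_trans (norm2_ge0 x0) (le_Rad x0 x0_feas).
apply: sup_dist_le.
- by rewrite mulr_ge0 // ltW.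
- by exists (dotv c x0 + EQ x0), x0.
- by exists (dotv c (xtau 0) + EQ (e1 n1 (norm2 (xtau 0)))), 0; rewrite //= lexx.
- move=> _ [x x_feas <-].
  exists (dotv c (xtau (norm2 x)) + EQ (e1 n1 (norm2 (xtau (norm2 x))))).
    by exists (norm2 x); rewrite //= norm2_ge0 le_Rad.
  exact: (objective_le_proxy xt_feas xt_opt hxtau argmax_uniq rot_inv mono
           x x_feas (le_Rad x x_feas)).
- move=> _ [tau /andP[tau0 _] <-].
  have [[a_feas _] _] := hxtau tau tau0.
  exists (dotv c (xtau tau) + EQ (xtau tau)); first by exists (xtau tau).
  by have := rot_inv _ (le_Rad _ a_feas); rewrite ler_norml => /andP[+ _]; lra.
Qed.
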